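(* Let $n,k\ge 0$ be integers, let $\mathbb{P}^{(n)}=\{I,X,Y,Z\}^{\otimes n}$ be the $n$-qubit Pauli operators (modulo phase), and let $\mathcal{T}_P^{(k)}$ be the multi-time Pauli twirl acting on operators $\Upsilon$ on $\mathcal{H}_{\Upsilon_{0:k}}=\bigotimes_{j=0}^k(\mathcal{H}_{\mathfrak{i}_j}\otimes\mathcal{H}_{\mathfrak{o}_j})$ (each factor an $n$-qubit space) by \[ \mathcal{T}_P^{(k)}(\Upsilon)=\frac{1}{|\mathbb{P}^{(n)}|^{k+1}}\sum_{P_0,\dots,P_k\in\mathbb{P}^{(n)}}\Big(\bigotimes_{j=0}^k P_j\otimes P_j\Big)\,\Upsilon\,\Big(\bigotimes_{j=0}^k P_j\otimes P_j\Big), \] where in the $j$-th factor the first $P_j$ acts on $\mathcal{H}_{\mathfrak{i}_j}$ and the second on $\mathcal{H}_{\mathfrak{o}_j}$. Then: (1) (Validity) for every Choi operator $\Upsilon_{0:k}$ of a valid (CPTP) $k$-slot process tensor, $\mathcal{T}_P^{(k)}(\Upsilon_{0:k})$ is again the Choi operator of a valid (CPTP) $k$-slot process tensor; (2) (Projector) $\mathcal{T}_P^{(k)}\circ\mathcal{T}_P^{(k)}=\mathcal{T}_P^{(k)}$; (3) (Causality) the causal (affine) constraints are preserved: if $\Upsilon_{0:k}$ satisfies the causal constraints below, so does $\mathcal{T}_P^{(k)}(\Upsilon_{0:k})$.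
   Context: A $k$-slot process tensor is described by its Choi operator $\Upsilon_{0:k}$, a linear operator on $\mathcal{H}_{\Upsilon_{0:k}}=\bigotimes_{j=0}^k(\mathcal{H}_{\mathfrak{i}_j}\otimes\mathcal{H}_{\mathfrak{o}_j})$, where $\mathcal{H}_{\mathfrak{i}_j},\mathcal{H}_{\mathfrak{o}_j}$ are the system input/output spaces at time step $j$. It is valid (CPTP) iff $\Upsilon_{0:k}\ge 0$ and it satisfies the causal constraints: there are operators $\Upsilon_{0:j}$ on $\bigotimes_{l=0}^{j}(\mathcal{H}_{\mathfrak{i}_l}\otimes\mathcal{H}_{\mathfrak{o}_l})$, $j=0,\dots,k$ (with $\Upsilon_{0:k}$ the given operator), such that $\mathrm{Tr}_{\mathfrak{o}_j}[\Upsilon_{0:j}]=\Upsilon_{0:j-1}\otimes\mathbb{I}_{\mathfrak{i}_j}$ for $j=1,\dots,k$ and $\mathrm{Tr}_{\mathfrak{o}_0}[\Upsilon_{0:0}]=\mathbb{I}_{\mathfrak{i}_0}$. Choi operators use the unnormalised maximally entangled vector $\sum_i|i\rangle|i\rangle$. *)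

From HB Require Import structures.
From mathcomp Require Import all_boot all_order all_algebra all_field.
Set Implicit Arguments. Unset Strict Implicit. Unset Printing Implicit Defensive.
Import Order.TTheory GRing.Theory Num.Theory.
Local Open Scope ring_scope.

(* Computational basis of n qubits: bit strings of length n. *)
Definition Qb (n : nat) := {ffun 'I_n -> bool}.

(* Basis of H_{Upsilon_{0:j}} = (x)_{l=0}^{j} (H_{i_l} (x) H_{o_l}):
   for each time step l, a pair (input index, output index). *)
Definition Idx (n j : nat) := {ffun 'I_j.+1 -> (Qb n * Qb n)%type}.

(* Linear operators on the space with orthonormal basis indexed by T,
   given by their matrix entries <x|A|y>. *)
Definition Op (T : finType) := T -> T -> algC.

Definition opmul (T : finType) (A B : Op T) : Op T :=
  fun x y => \sum_(z : T) A x z * B z y.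

Definition idop (T : finType) : Op T := fun x y => (x == y)%:R.

Definition psd (T : finType) (A : Op T) : Prop :=
  (forall x y, A y x = (A x y)^*) /\
  (forall v : T -> algC, 0 <= \sum_(x : T) \sum_(y : T) (v x)^* * A x y * v y).

(* Single-qubit Paulis: 0 = I, 1 = X, 2 = Y, 3 = Z; entries <b|P|c>. *)
Definition pauli1 (a : 'I_4) (b c : bool) : algC :=
  match val a with
  | 0 => (b == c)%:R
  | 1 => (b != c)%:R
  | 2 => if b == c then 0 else (if b then 'i else - 'i)
  | _ => if b == c then (if b then -1 else 1) else 0
  end.

Definition PauliIdx (n : nat) := {ffun 'I_n -> 'I_4}.
Definition pauli (n : nat) (p : PauliIdx n) : Op (Qb n) :=
  fun x y => \prod_(q < n) pauli1 (p q) (x q) (y q).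

Definition pauli_layer (n k : nat) (ps : {ffun 'I_k.+1 -> PauliIdx n}) :
  Op (Idx n k) :=
  fun x y => \prod_(j < k.+1)
     (pauli (ps j) (x j).1 (y j).1 * pauli (ps j) (x j).2 (y j).2).

Definition twirl (n k : nat) (U : Op (Idx n k)) : Op (Idx n k) :=
  fun x y => (#|PauliIdx n| ^ k.+1)%:R^-1 *
    \sum_(ps : {ffun 'I_k.+1 -> PauliIdx n})
       opmul (opmul (pauli_layer ps) U) (pauli_layer ps) x y.

Definition ext (n j : nat) (x : Idx n j) (p : Qb n * Qb n) : Idx n j.+1 :=
  [ffun l : 'I_j.+2 => if unlift ord_max l is Some l' then x l' else p].

Definition single (n : nat) (p : Qb n * Qb n) : Idx n 0 := [ffun _ => p].

(* Tr_{o_{j+1}} : operators on H_{0:j+1} -> operators on H_{0:j} (x) H_{i_{j+1}}. *)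
Definition ptrace_out (n j : nat) (A : Op (Idx n j.+1)) :
  Op (Idx n j * Qb n)%type :=
  fun u v => \sum_(c : Qb n) A (ext u.1 (u.2, c)) (ext v.1 (v.2, c)).

Definition ptrace_out0 (n : nat) (A : Op (Idx n 0)) : Op (Qb n) :=
  fun a b => \sum_(c : Qb n) A (single (a, c)) (single (b, c)).

Definition tens_id (n j : nat) (B : Op (Idx n j)) :
  Op (Idx n j * Qb n)%type :=
  fun u v => B u.1 v.1 * (u.2 == v.2)%:R.

Definition causal (n k : nat) (U : Op (Idx n k)) : Prop :=
  exists Ups : forall j : nat, Op (Idx n j),
    Ups k = U /\
    ptrace_out0 (Ups 0%N) = @idop (Qb n) /\
    (forall j : nat, (j < k)%N -> ptrace_out (Ups j.+1) = tens_id (Ups j)).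

Definition valid_pt (n k : nat) (U : Op (Idx n k)) : Prop :=
  psd U /\ causal U.

From HB Require Import structures.
From mathcomp Require Import all_boot all_order all_algebra all_field.
From mathcomp Require Import ring.
From Stdlib Require Import FunctionalExtensionality.
Set Implicit Arguments. Unset Strict Implicit. Unset Printing Implicit Defensive.
Import Order.TTheory GRing.Theory Num.Theory.
Local Open Scope ring_scope.

(* Every Pauli is a phase times a bit flip, so conjugating [U] by a layer
   (x)_j P_j (x) P_j turns the entry [U x y] into a phase times
   [U (x (+) f) (y (+) f)], where [f] is the flip pattern of the layer.
   Summing the phases over all layers with a given flip pattern gives
   2^(n(k+1)) when the input-output parities of [x] and [y] agree at every
   step, and 0 otherwise.  Hence the twirl is the composite of two commuting
   idempotents: averaging over simultaneous flips of inputs and outputs, and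
   deleting the entries between different parity classes.  Both are sums of
   nonnegative multiples of conjugations (by permutations, resp. by diagonal
   projections), so they preserve positivity, and both commute with the
   partial trace over the last output, because inputs and outputs are flipped
   together. *)

Section BoolIndicators.
Variable R : comPzSemiRingType.

Lemma mulr_natb (a b : bool) : (a%:R * b%:R : R) = (a && b)%:R.
Proof. by case: a; case: b; rewrite ?mulr1 ?mulr0. Qed.

Lemma prodr_natb (I : finType) (b : I -> bool) :
  \prod_(i : I) ((b i)%:R : R) = ([forall i, b i])%:R.
Proof.
have [/forallP b_all|/forallPn [i /negbTE bi]] := boolP [forall i, b i].
  by rewrite big1 // => i _; rewrite b_all.
by rewrite (bigD1 i) //= bi mul0r.
Qed.

Lemma prodr_natb2 (I J : finType) (b : I -> J -> bool) :
  \prod_(i : I) \prod_(j : J) ((b i j)%:R : R) = ([forall i, [forall j, b i j]])%:R.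
Proof. by under eq_bigr do rewrite prodr_natb; rewrite prodr_natb. Qed.

Lemma sumr_const_card (T : finType) (c : R) : \sum_(t : T) c = #|T|%:R * c.
Proof. by rewrite sumr_const mulr_natl. Qed.

Lemma sum_mul_natr_eq (T : finType) (G : T -> R) (a : T) :
  \sum_(z : T) G z * (z == a)%:R = G a.
Proof.
rewrite (bigD1 a) //= eqxx mulr1 big1 ?addr0 // => z /negbTE ->.
by rewrite mulr0.
Qed.

End BoolIndicators.

Lemma eq_ffun2 (I J : finType) (T : eqType) (F G : {ffun I -> {ffun J -> T}}) :
  (F == G) = [forall i, [forall j, F i j == G i j]].
Proof.
apply/eqP/forallP => [-> i|FG]; first exact/forallP.
by apply/ffunP => i; apply/ffunP => j; apply/eqP/(forallP (FG i)).
Qed.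

Section FfunRcons.
Variables (T : Type) (j : nat).

Definition rcons_ffun (x : {ffun 'I_j.+1 -> T}) (t : T) : {ffun 'I_j.+2 -> T} :=
  [ffun l => if unlift ord_max l is Some l' then x l' else t].

Definition belast_ffun (x : {ffun 'I_j.+2 -> T}) : {ffun 'I_j.+1 -> T} :=
  [ffun l => x (lift ord_max l)].

Lemma rcons_ffun_max x t : rcons_ffun x t ord_max = t.
Proof. by rewrite ffunE unlift_none. Qed.

Lemma rcons_ffun_lift x t l : rcons_ffun x t (lift ord_max l) = x l.
Proof. by rewrite ffunE liftK. Qed.

Lemma rcons_ffunK x t : belast_ffun (rcons_ffun x t) = x.
Proof. by apply/ffunP => l; rewrite ffunE rcons_ffun_lift. Qed.

Lemma belast_ffunK x : rcons_ffun (belast_ffun x) (x ord_max) = x.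
Proof.
apply/ffunP => l; case: (unliftP ord_max l) => [l'|] ->.
  by rewrite rcons_ffun_lift ffunE.
by rewrite rcons_ffun_max.
Qed.

End FfunRcons.

Lemma eq_rcons_ffun (T : eqType) j (x y : {ffun 'I_j.+1 -> T}) s t :
  (rcons_ffun x s == rcons_ffun y t) = (x == y) && (s == t).
Proof.
apply/eqP/andP => [E|[/eqP -> /eqP ->]] //.
split; apply/eqP; first by rewrite -(rcons_ffunK x s) E rcons_ffunK.
by rewrite -(rcons_ffun_max x s) E rcons_ffun_max.
Qed.

Lemma sum_rcons_ffun (R : nmodType) (T : finType) j (G : {ffun 'I_j.+2 -> T} -> R) :
  \sum_f G f = \sum_(f : {ffun 'I_j.+1 -> T}) \sum_t G (rcons_ffun f t).
Proof.
rewrite pair_big (reindex (fun p => rcons_ffun p.1 p.2)) //=.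
exists (fun f => (belast_ffun f, f ord_max)) => [[f t]|f] _ /=.
  by rewrite rcons_ffunK rcons_ffun_max.
exact: belast_ffunK.
Qed.

Lemma sum_ffun1 (R : nmodType) (T : finType) (G : {ffun 'I_1 -> T} -> R) :
  \sum_f G f = \sum_t G [ffun => t].
Proof.
rewrite (reindex (fun t => [ffun => t])) //=.
exists (fun f => f ord0) => [t|f] _; first by rewrite ffunE.
by apply/ffunP => i; rewrite ffunE (ord1 i).
Qed.

Lemma const_ffun1_inj (T : Type) : injective (fun t : T => [ffun _ : 'I_1 => t]).
Proof. by move=> s t /ffunP/(_ ord0); rewrite !ffunE. Qed.

Section PositiveSemidefinite.
Variable T : finType.
Implicit Types (A : Op T) (v : T -> algC).

Definition qform A v : algC := \sum_x \sum_y (v x)^* * A x y * v y.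

Lemma psd_sum (I : finType) (A : I -> Op T) :
  (forall i, psd (A i)) -> psd (fun x y => \sum_i A i x y).
Proof.
move=> psdA; split=> [x y|v].
  by rewrite rmorph_sum; apply: eq_bigr => i _; case: (psdA i) => ->.
rewrite -/(qform _ v).
have -> : qform (fun x y => \sum_i A i x y) v = \sum_i qform (A i) v.
  rewrite /qform; under eq_bigr do under eq_bigr do rewrite mulr_sumr mulr_suml.
  by under eq_bigr do rewrite exchange_big; rewrite exchange_big.
by apply: sumr_ge0 => i _; case: (psdA i) => _ /(_ v).
Qed.

Lemma psd_scale (c : algC) A : 0 <= c -> psd A -> psd (fun x y => c * A x y).
Proof.
move=> c_ge0 [hermA posA]; split=> [x y|v].
  by rewrite hermA -[c in LHS]geC0_conj // -rmorphM.
rewrite -/(qform _ v).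
have -> : qform (fun x y => c * A x y) v = c * qform A v.
  rewrite /qform mulr_sumr; apply: eq_bigr => x _.
  by rewrite mulr_sumr; apply: eq_bigr => y _; ring.
exact: mulr_ge0 c_ge0 (posA v).
Qed.

Lemma psd_perm (s : T -> T) A : injective s -> psd A -> psd (fun x y => A (s x) (s y)).
Proof.
move=> inj_s [hermA posA]; split=> [x y|v]; first exact: hermA.
have := posA (v \o invF inj_s).
rewrite (reindex_inj inj_s); under eq_bigr do rewrite (reindex_inj inj_s).
by under eq_bigr do under eq_bigr do rewrite /= !invF_f.
Qed.

Lemma psd_restrict (m : pred T) A :
  psd A -> psd (fun x y => (m x)%:R * A x y * (m y)%:R).
Proof.
move=> [hermA posA]; split=> [x y|v].
  by rewrite !rmorphM !rmorph_nat hermA; ring.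
have := posA (fun x => (m x)%:R * v x).
congr (0 <= _); apply: eq_bigr => x _; apply: eq_bigr => y _.
by rewrite rmorphM rmorph_nat; ring.
Qed.

End PositiveSemidefinite.

Definition flip n (x e : Qb n) : Qb n := [ffun q => x q (+) e q].

Lemma flipK n (e : Qb n) : involutive (fun x : Qb n => flip x e).
Proof. by move=> x; apply/ffunP => q; rewrite !ffunE -addbA addbb addbF. Qed.

Lemma flip_inj n (e : Qb n) : injective (fun x : Qb n => flip x e).
Proof. exact: inv_inj (flipK e). Qed.

Lemma flipA n (x e e' : Qb n) : flip (flip x e) e' = flip x (flip e e').
Proof. by apply/ffunP => q; rewrite !ffunE addbA. Qed.

Lemma flipAC n (x y e : Qb n) : flip (flip x e) (flip y e) = flip x y.
Proof. by apply/ffunP => q; rewrite !ffunE addbACA addbb addbF. Qed.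

Definition flip_pair n (p : Qb n * Qb n) (e : Qb n) := (flip p.1 e, flip p.2 e).

Definition Flips n k := {ffun 'I_k.+1 -> Qb n}.

Definition shift n k (x : Idx n k) (f : Flips n k) : Idx n k :=
  [ffun j => flip_pair (x j) (f j)].

Definition parity n k (x : Idx n k) : Flips n k := [ffun j => flip (x j).1 (x j).2].

Lemma shiftK n k (f : Flips n k) : involutive (fun x : Idx n k => shift x f).
Proof.
by move=> x; apply/ffunP => j; rewrite !ffunE /flip_pair /= !flipK; case: (x j).
Qed.

Lemma shift_inj n k (f : Flips n k) : injective (fun x : Idx n k => shift x f).
Proof. exact: inv_inj (shiftK f). Qed.

Definition flip_flips n k (f g : Flips n k) : Flips n k := [ffun j => flip (f j) (g j)].

Lemma flip_flipsK n k (f : Flips n k) : involutive (flip_flips f).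
Proof. by move=> g; apply/ffunP => j; apply/ffunP => q; rewrite !ffunE addbA addbb. Qed.

Lemma shiftA n k (x : Idx n k) (f g : Flips n k) :
  shift (shift x f) g = shift x (flip_flips f g).
Proof. by apply/ffunP => j; rewrite !ffunE /flip_pair /= !flipA. Qed.

Lemma parity_shift n k (x : Idx n k) f : parity (shift x f) = parity x.
Proof. by apply/ffunP => j; rewrite !ffunE /= flipAC. Qed.

Lemma card_Qb n : #|Qb n| = (2 ^ n)%N.
Proof. by rewrite card_ffun card_bool card_ord. Qed.

Lemma card_Flips n k : #|Flips n k| = ((2 ^ n) ^ k.+1)%N.
Proof. by rewrite card_ffun card_Qb card_ord. Qed.

Lemma card_Flips_S n j : #|Flips n j.+1| = (#|Flips n j| * #|Qb n|)%N.
Proof. by rewrite !card_Flips card_Qb expnSr. Qed.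

Lemma card_Flips0 n : #|Flips n 0| = #|Qb n|.
Proof. by rewrite card_Flips card_Qb expn1. Qed.

Lemma card_Qb_neq0 n : (#|Qb n|%:R : algC) != 0.
Proof. by rewrite card_Qb pnatr_eq0 -lt0n expn_gt0. Qed.

Lemma card_Flips_neq0 n k : (#|Flips n k|%:R : algC) != 0.
Proof. by rewrite card_Flips pnatr_eq0 -lt0n !expn_gt0. Qed.

(* [ext] is [rcons_ffun] at [T := Qb n * Qb n], by conversion. *)
Lemma parity_ext n j (x : Idx n j) p :
  parity (ext x p) = rcons_ffun (parity x) (flip p.1 p.2).
Proof.
apply/ffunP => l; case: (unliftP ord_max l) => [l'|] ->.
  by rewrite ffunE !rcons_ffun_lift ffunE.
by rewrite ffunE !rcons_ffun_max.
Qed.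

Lemma shift_ext n j (x : Idx n j) p (f : Flips n j) e :
  shift (ext x p) (rcons_ffun f e) = ext (shift x f) (flip_pair p e).
Proof.
apply/ffunP => l; case: (unliftP ord_max l) => [l'|] ->.
  by rewrite ffunE !rcons_ffun_lift ffunE.
by rewrite ffunE !rcons_ffun_max.
Qed.

Lemma parity_single n (p : Qb n * Qb n) : parity (single p) = [ffun => flip p.1 p.2].
Proof. by apply/ffunP => i; rewrite !ffunE. Qed.

Lemma shift_single n (p : Qb n * Qb n) e :
  shift (single p) [ffun => e] = single (flip_pair p e).
Proof. by apply/ffunP => i; rewrite !ffunE. Qed.

Definition pauli_flip (a : 'I_4) : bool := (val a == 1)%N || (val a == 2)%N.

Definition pauli_phase (a : 'I_4) (b : bool) : algC :=
  match val a with
  | 0 | 1 => 1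
  | 2 => if b then 'i else - 'i
  | _ => if b then -1 else 1
  end.

Lemma pauli1E a b c : pauli1 a b c = pauli_phase a b * (c == b (+) pauli_flip a)%:R.
Proof.
case: a => [[|[|[|[|m]]]] ?]; rewrite /pauli1 /pauli_phase /pauli_flip /=;
  by case: b; case: c; rewrite /= ?mulr1 ?mulr0.
Qed.

Definition pauli_flips n (p : PauliIdx n) : Qb n := [ffun q => pauli_flip (p q)].

Definition pauli_phases n (p : PauliIdx n) (x : Qb n) : algC :=
  \prod_q pauli_phase (p q) (x q).

Lemma pauliE n (p : PauliIdx n) x y :
  pauli p x y = pauli_phases p x * (y == flip x (pauli_flips p))%:R.
Proof.
rewrite /pauli (eq_bigr _ (fun q _ => pauli1E _ _ _)) big_split /= prodr_natb.
congr (_ * (nat_of_bool _)%:R); apply/forallP/eqP => [yE|-> q]; last by rewrite !ffunE.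
by apply/ffunP => q; rewrite !ffunE; apply/eqP.
Qed.

Definition layer_flips n k (ps : {ffun 'I_k.+1 -> PauliIdx n}) : Flips n k :=
  [ffun j => pauli_flips (ps j)].

Definition layer_phase n k (ps : {ffun 'I_k.+1 -> PauliIdx n}) (x : Idx n k) : algC :=
  \prod_j (pauli_phases (ps j) (x j).1 * pauli_phases (ps j) (x j).2).

Lemma pauli_layerE n k (ps : {ffun 'I_k.+1 -> PauliIdx n}) :
  pauli_layer ps = fun x y => layer_phase ps x * (y == shift x (layer_flips ps))%:R.
Proof.
apply: functional_extensionality => x; apply: functional_extensionality => y.
rewrite /pauli_layer (eq_bigr _ (fun j _ => etrans (congr2 *%R (pauliE _ _ _) (pauliE _ _ _))
  (mulrACA _ _ _ _))) big_split /= -/(layer_phase _ _).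
under eq_bigr do rewrite mulr_natb.
rewrite prodr_natb; congr (_ * (nat_of_bool _)%:R); apply/forallP/eqP => [yE|-> j].
  apply/ffunP => j; have /andP[/eqP E1 /eqP E2] := yE j.
  by rewrite !ffunE /flip_pair -E1 -E2; case: (y j).
by rewrite !ffunE !eqxx.
Qed.

Lemma conj_monomialE (T : finType) (a : T -> algC) (s : T -> T) (U : Op T) x y :
  involutive s ->
  opmul (opmul (fun x y => a x * (y == s x)%:R) U) (fun x y => a x * (y == s x)%:R) x y
  = a x * a (s y) * U (s x) (s y).
Proof.
move=> sK; rewrite /opmul.
under eq_bigr => w _.
  under eq_bigr => z _ do rewrite mulrAC.
  rewrite sum_mul_natr_eq eq_sym (inv_eq sK) mulrA.
  over.
by rewrite sum_mul_natr_eq; ring.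
Qed.

(* For a fixed flip [e] only {I, Z} (e = 0) or {X, Y} (e = 1) contribute; their
   phase products are equal when x1 (+) x2 = y1 (+) y2 and opposite otherwise. *)
Lemma sum_pauli_phase (x1 x2 y1 y2 e : bool) :
  \sum_(a < 4) pauli_phase a x1 * pauli_phase a x2 *
     (pauli_phase a (y1 (+) e) * pauli_phase a (y2 (+) e)) * (pauli_flip a == e)%:R
  = 2 * (x1 (+) x2 == y1 (+) y2)%:R.
Proof.
have ii : 'i * 'i = -1 :> algC by rewrite -expr2 sqrCi.
rewrite !big_ord_recl big_ord0 /pauli_phase /pauli_flip /=.
by case: x1; case: x2; case: y1; case: y2; case: e;
  rewrite /= ?mulr1 ?mulr0 ?mul1r ?mul0r ?addr0 ?add0r ?mulNr ?mulrN ?opprK ?ii; ring.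
Qed.

Lemma sum_layer_phase n k (x y : Idx n k) (f : Flips n k) :
  \sum_(ps | layer_flips ps == f) layer_phase ps x * layer_phase ps (shift y f) =
  ((2 ^ n) ^ k.+1)%:R * (parity x == parity y)%:R.
Proof.
pose t j q a := pauli_phase a ((x j).1 q) * pauli_phase a ((x j).2 q) *
  (pauli_phase a ((y j).1 q (+) f j q) * pauli_phase a ((y j).2 q (+) f j q)) *
  (pauli_flip a == f j q)%:R.
have termE ps : layer_phase ps x * layer_phase ps (shift y f) * (layer_flips ps == f)%:R
    = \prod_j \prod_q t j q (ps j q).
  rewrite /layer_phase /pauli_phases eq_ffun2 -prodr_natb2.
  rewrite -!big_split; apply: eq_bigr => j _; rewrite -!big_split.
  by apply: eq_bigr => q _; rewrite /t !ffunE.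
rewrite big_mkcond; under eq_bigr do rewrite -mulrb -mulr_natr termE.
rewrite -(bigA_distr_bigA (fun j (g : PauliIdx n) => \prod_q t j q (g q))) /=.
under eq_bigr => j _ do rewrite -(bigA_distr_bigA (t j)).
under eq_bigr do under eq_bigr do rewrite /t sum_pauli_phase.
under eq_bigr do rewrite big_split prodr_const card_ord /=.
rewrite big_split prodr_natb2 prodr_const card_ord -!natrX eq_ffun2.
congr (_ * (nat_of_bool _)%:R).
by apply: eq_forallb => j; apply: eq_forallb => q; rewrite !ffunE.
Qed.

Definition dephase n k (U : Op (Idx n k)) : Op (Idx n k) :=
  fun x y => (parity x == parity y)%:R * U x y.

Definition flip_avg n k (U : Op (Idx n k)) : Op (Idx n k) :=
  fun x y => #|Flips n k|%:R^-1 * \sum_(f : Flips n k) U (shift x f) (shift y f).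

Lemma card_PauliIdx_layers n k :
  (#|PauliIdx n| ^ k.+1)%N = (#|Flips n k| * #|Flips n k|)%N.
Proof. by rewrite card_Flips card_ffun !card_ord -!expnMn. Qed.

Lemma twirlE n k (U : Op (Idx n k)) : twirl U = dephase (flip_avg U).
Proof.
apply: functional_extensionality => x; apply: functional_extensionality => y.
rewrite /twirl.
under eq_bigr do rewrite pauli_layerE (conj_monomialE _ _ _ _ (shiftK _)).
rewrite (partition_big (@layer_flips n k) predT) //=.
under eq_bigr => f _.
  rewrite (eq_bigr (fun ps => layer_phase ps x * layer_phase ps (shift y f) *
                              U (shift x f) (shift y f))) => [|ps /eqP -> //].
  rewrite -big_distrl /= sum_layer_phase -card_Flips.
  over.
rewrite /dephase /flip_avg card_PauliIdx_layers natrM -!mulr_sumr.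
by field; rewrite card_Flips_neq0.
Qed.

Section TwirlFactors.
Variables n k : nat.
Implicit Type U : Op (Idx n k).

Lemma dephaseE U :
  dephase U = fun x y => \sum_(s : Flips n k) (parity x == s)%:R * U x y * (parity y == s)%:R.
Proof.
apply: functional_extensionality => x; apply: functional_extensionality => y.
by rewrite /dephase; under eq_bigr do rewrite [parity y == _]eq_sym; rewrite sum_mul_natr_eq.
Qed.

Lemma psd_dephase U : psd U -> psd (dephase U).
Proof.
by move=> psdU; rewrite dephaseE; apply: psd_sum => s; apply: psd_restrict.
Qed.

Lemma psd_flip_avg U : psd U -> psd (flip_avg U).
Proof.
move=> psdU; apply: psd_scale; first by rewrite invr_ge0 ler0n.
by apply: psd_sum => f; apply: psd_perm (@shift_inj n k f) psdU.
Qed.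

Lemma dephase_id U : dephase (dephase U) = dephase U.
Proof.
apply: functional_extensionality => x; apply: functional_extensionality => y.
by rewrite /dephase mulrA mulr_natb andbb.
Qed.

Lemma flip_avg_id U : flip_avg (flip_avg U) = flip_avg U.
Proof.
apply: functional_extensionality => x; apply: functional_extensionality => y.
rewrite /flip_avg; under eq_bigr => f _.
  under eq_bigr do rewrite !shiftA.
  rewrite (reindex_inj (inv_inj (flip_flipsK f))) /=.
  under eq_bigr do rewrite flip_flipsK.
  over.
by rewrite /= sumr_const_card mulrA mulVf ?card_Flips_neq0 ?mul1r.
Qed.

Lemma flip_avg_dephase U : flip_avg (dephase U) = dephase (flip_avg U).
Proof.
apply: functional_extensionality => x; apply: functional_extensionality => y.
rewrite /flip_avg /dephase; under eq_bigr do rewrite !parity_shift.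
by rewrite -mulr_sumr mulrCA.
Qed.

End TwirlFactors.

Section PartialTrace.
Variable n : nat.

Lemma ptrace_out_dephaseE j (A : Op (Idx n j.+1)) u v :
  ptrace_out (dephase A) u v =
  (parity u.1 == parity v.1)%:R * (u.2 == v.2)%:R * ptrace_out A u v.
Proof.
rewrite /ptrace_out /dephase mulr_sumr; apply: eq_bigr => c _.
by rewrite !parity_ext eq_rcons_ffun (inj_eq (@flip_inj n c)) mulr_natb.
Qed.

Lemma ptrace_out_flip_avgE j (A : Op (Idx n j.+1)) u v :
  ptrace_out (flip_avg A) u v = #|Flips n j.+1|%:R^-1 *
    \sum_(f : Flips n j) \sum_(e : Qb n)
      ptrace_out A (shift u.1 f, flip u.2 e) (shift v.1 f, flip v.2 e).
Proof.
rewrite /ptrace_out /flip_avg -mulr_sumr; congr (_ * _).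
rewrite exchange_big sum_rcons_ffun; apply: eq_bigr => f _; apply: eq_bigr => e _.
rewrite (reindex_inj (@flip_inj n e)); apply: eq_bigr => c _.
by rewrite !shift_ext /flip_pair /= flipK.
Qed.

Lemma ptrace_out0_dephaseE (A : Op (Idx n 0)) a b :
  ptrace_out0 (dephase A) a b = (a == b)%:R * ptrace_out0 A a b.
Proof.
rewrite /ptrace_out0 /dephase mulr_sumr; apply: eq_bigr => c _.
by rewrite !parity_single (inj_eq (@const_ffun1_inj _)) (inj_eq (@flip_inj n c)).
Qed.

Lemma ptrace_out0_flip_avgE (A : Op (Idx n 0)) a b :
  ptrace_out0 (flip_avg A) a b =
  #|Flips n 0|%:R^-1 * \sum_(e : Qb n) ptrace_out0 A (flip a e) (flip b e).
Proof.
rewrite /ptrace_out0 /flip_avg -mulr_sumr; congr (_ * _).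
rewrite exchange_big sum_ffun1; apply: eq_bigr => e _.
rewrite (reindex_inj (@flip_inj n e)); apply: eq_bigr => c _.
by rewrite !shift_single /flip_pair /= flipK.
Qed.

Lemma ptrace_out_dephase j (A : Op (Idx n j.+1)) (B : Op (Idx n j)) :
  ptrace_out A = tens_id B -> ptrace_out (dephase A) = tens_id (dephase B).
Proof.
move=> AB; apply: functional_extensionality => u; apply: functional_extensionality => v.
rewrite ptrace_out_dephaseE AB /tens_id /dephase.
by case: (u.2 == v.2); rewrite /= ?mulr1n ?mulr0n ?mulr1 ?mulr0.
Qed.

Lemma ptrace_out_flip_avg j (A : Op (Idx n j.+1)) (B : Op (Idx n j)) :
  ptrace_out A = tens_id B -> ptrace_out (flip_avg A) = tens_id (flip_avg B).
Proof.
move=> AB; apply: functional_extensionality => u; apply: functional_extensionality => v.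
rewrite ptrace_out_flip_avgE AB /tens_id /flip_avg /=.
under eq_bigr do under eq_bigr do rewrite (inj_eq (@flip_inj n _)).
under eq_bigr do rewrite sumr_const_card.
rewrite -mulr_sumr -!mulr_suml card_Flips_S natrM.
by field; rewrite card_Flips_neq0 card_Qb_neq0.
Qed.

Lemma ptrace_out0_dephase (A : Op (Idx n 0)) :
  ptrace_out0 A = @idop (Qb n) -> ptrace_out0 (dephase A) = @idop (Qb n).
Proof.
move=> A1; apply: functional_extensionality => a; apply: functional_extensionality => b.
by rewrite ptrace_out0_dephaseE A1 /idop mulr_natb andbb.
Qed.

Lemma ptrace_out0_flip_avg (A : Op (Idx n 0)) :
  ptrace_out0 A = @idop (Qb n) -> ptrace_out0 (flip_avg A) = @idop (Qb n).
Proof.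
move=> A1; apply: functional_extensionality => a; apply: functional_extensionality => b.
rewrite ptrace_out0_flip_avgE A1 /idop.
under eq_bigr do rewrite (inj_eq (@flip_inj n _)).
by rewrite sumr_const_card card_Flips0 mulrA mulVf ?card_Qb_neq0 ?mul1r.
Qed.

End PartialTrace.

Lemma psd_twirl n k (U : Op (Idx n k)) : psd U -> psd (twirl U).
Proof. by move=> psdU; rewrite twirlE; apply/psd_dephase/psd_flip_avg. Qed.

Lemma twirl_id n k (U : Op (Idx n k)) : twirl (twirl U) = twirl U.
Proof. by rewrite !twirlE flip_avg_dephase dephase_id flip_avg_id. Qed.

Lemma causal_twirl n k (U : Op (Idx n k)) : causal U -> causal (twirl U).
Proof.
move=> [Ups [UpsE [Ups0 UpsS]]].
exists (fun j => dephase (flip_avg (Ups j))); split; first by rewrite UpsE twirlE.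
split; first exact/ptrace_out0_dephase/ptrace_out0_flip_avg.
by move=> j lt_jk; apply/ptrace_out_dephase/ptrace_out_flip_avg/UpsS.
Qed.

Theorem proposition1 (n k : nat) :
  (forall U : Op (Idx n k), valid_pt U -> valid_pt (twirl U)) /\
  (forall U : Op (Idx n k), twirl (twirl U) = twirl U) /\
  (forall U : Op (Idx n k), causal U -> causal (twirl U)).
Proof.
split; last by split; [exact: twirl_id | exact: causal_twirl].
by move=> U [psdU causalU]; split; [exact: psd_twirl | exact: causal_twirl].
Qed.
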